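(* Let $\mathfrak L=\mathbb V\oplus\mathbb W$ be a color gLt-algebra admitting a quasi-multiplicative basis $\mathfrak B=\{e_i\}_{i\in I}$ of $\mathbb W\neq0$ which is $\mu$-quasi-multiplicative. If $\mathfrak L$ is centerless (i.e. $\mathcal Z(\mathfrak L)=0$) and $\mathbb V$ is tight, then $\mathfrak L=\bigoplus_k\mathfrak J_k$ is the direct sum of the family of its minimal color gLt-ideals, each one admitting a $\mu$-quasi-multiplicative basis inherited by the one of $\mathfrak L$.
   Context: Let $\mathbb F$ be a field, $\mathbb G$ an abelian group, $n\ge 2$, and $\epsilon:\mathbb G\times\mathbb G\to\mathbb F\setminus\{0\}$ a bicharacter ($\epsilon(k,g+h)=\epsilon(k,g)\epsilon(k,h)$, $\epsilon(g+h,k)=\epsilon(g,k)\epsilon(h,k)$, $\epsilon(g,h)\epsilon(h,g)=1$). A graded $n$-ary algebra is a $\mathbb G$-graded vector space $\mathfrak L=\bigoplus_{g\in\mathbb G}\mathfrak L_g$ with an $n$-linear map $\langle\cdot,\dots,\cdot\rangle:\mathfrak L^n\to\mathfrak L$ such that $\langle\mathfrak L_{g_1},\dots,\mathfrak L_{g_n}\rangle\subset\mathfrak L_{g_1+\dots+g_n}$. For $\sigma\in\mathbb S_n$ write $\langle x_1,\dots,x_n\rangle_\sigma:=\langle x_{\sigma(1)},\dots,x_{\sigma(n)}\rangle$; for subsets $A_1,\dots,A_n$, $\langle A_1,\dots,A_n\rangle_\sigma$ denotes the linear span of all $\langle x_1,\dots,x_n\rangle_\sigma$ with $x_r\in A_r$.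 A color gLt-algebra is a graded $n$-ary algebra satisfying, for each $k=1,\dots,n$ and fixed scalars $\alpha^{\sigma_1,\sigma_2}_{i,j,k}\in\mathbb F$, the color version (each term on the right multiplied by the product of values of $\epsilon$ on the degrees of the homogeneous arguments transposed in passing from the left-hand order to the order of that term) of the identity $\langle y_1,\dots,y_{k-1},\langle x_1,\dots,x_n\rangle,y_k,\dots,y_{n-1}\rangle=\sum_{1\le i,j\le n,\,\sigma_1\in\mathbb S_n,\,\sigma_2\in\mathbb S_{n-1}}\alpha^{\sigma_1,\sigma_2}_{i,j,k}\langle x_{\sigma_1(1)},\dots,x_{\sigma_1(i-1)},\langle y_{\sigma_2(1)},\dots,y_{\sigma_2(j-1)},x_{\sigma_1(i)},y_{\sigma_2(j)},\dots,y_{\sigma_2(n-1)}\rangle,x_{\sigma_1(i+1)},\dots,x_{\sigma_1(n)}\rangle$. A $\mathbb G$-graded subspace $\mathcal I\subset\mathfrak L$ is a color gLt-ideal if $\langle\mathcal I,\mathfrak L,\dots,\mathfrak L\rangle_\sigma\subset\mathcal I$ for every $\sigma\in\mathbb S_n$. The center is $\mathcal Z(\mathfrak L):=\{x\in\mathfrak L:\langle x,\mathfrak L,\dots,\mathfrak L\rangle_\sigma=0\text{ for all }\sigma\in\mathbb S_n\}$. $\mathfrak L$ admits a quasi-multiplicative basis if $\mathfrak L=\mathbb V\oplus\mathbb W$ with $\mathbb V$, $\mathbb W\ne0$ graded subspaces and $\mathfrak B=\{e_i\}_{i\in I}$ a basis of homogeneous elements of $\mathbb W$ such that: (1) for $i_1,\dots,i_n\in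 I$, either $\langle e_{i_1},\dots,e_{i_n}\rangle\in\mathbb Fe_j$ for some $j\in I$ or $\langle e_{i_1},\dots,e_{i_n}\rangle\in\mathbb V$; (2) for $0<k<n$, $i_1,\dots,i_k\in I$ and $\sigma\in\mathbb S_n$, $\langle e_{i_1},\dots,e_{i_k},\mathbb V,\dots,\mathbb V\rangle_\sigma\subset\mathbb Fe_{j_\sigma}$ for some $j_\sigma\in I$; (3) either $\langle\mathbb V,\dots,\mathbb V\rangle\subset\mathbb Fe_j$ for some $j\in I$ or $\langle\mathbb V,\dots,\mathbb V\rangle\subset\mathbb V$. A color gLt-ideal $\mathfrak S$ admits a basis inherited by the one of $\mathfrak L$ if $\mathfrak S=\mathbb V_{\mathfrak S}\oplus\mathbb W_{\mathfrak S}$ with $\mathbb V_{\mathfrak S}$ a graded subspace of $\mathbb V$ and $0\ne\mathbb W_{\mathfrak S}$ a graded subspace of $\mathbb W$ admitting a subset $\mathfrak B'\subset\mathfrak B$ as a basis (then $\mathfrak S$ is itself a color gLt-algebra with quasi-multiplicative basis $\mathfrak B'$ of $\mathbb W_{\mathfrak S}$). A color gLt-algebra with a quasi-multiplicative basis is minimal if its only nonzero color gLt-ideal admitting a basis inherited by its own is itself; a minimal color gLt-ideal of $\mathfrak L$ is a color gLt-ideal with an inherited basis which, as such an algebra, is minimal. Index maps (defined for any such algebra, here written for $\mathfrak L$): let $v$ be a symbol not in $I$, $\mathfrak I:=I\,\dot\cup\,\{v\}$; for each $j\in\mathfrak I$ take a new symbol $\overline j$, $\overline I:=\{\overline i:i\in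 I\}$, $\overline{\mathfrak I}:=\overline I\,\dot\cup\,\{\overline v\}$; set $\overline{(\overline j)}:=j$. Put $u_j:=e_j$ for $j\in I$ and $u_v:=\mathbb V$. For $\sigma\in\mathbb S_n$ and $(j_1,\dots,j_n)\in\mathfrak I^n$ let $a_\sigma(j_1,\dots,j_n)=\{r\}$ if $r\in I$ and $0\ne\langle u_{j_1},\dots,u_{j_n}\rangle_\sigma\subset\mathbb Fe_r$, $=\{v\}$ if $0\ne\langle u_{j_1},\dots,u_{j_n}\rangle_\sigma\subset\mathbb V$, and $=\emptyset$ otherwise. For $j,j_2,\dots,j_n\in\mathfrak I$ let $b_\sigma(j,\overline j_2,\dots,\overline j_n):=\{x\in\mathfrak I: a_\sigma(x,j_2,\dots,j_n)=\{j\}\}$. Define $\mu$ on $(\mathfrak I\,\dot\cup\,\overline{\mathfrak I})\times(\mathfrak I^{n-1}\,\dot\cup\,\overline{\mathfrak I}^{n-1})$ with values subsets of $\mathfrak I$ by: $\mu(j,j_1,\dots,j_{n-1})=\bigcup_{\sigma\in\mathbb S_n}a_\sigma(j,j_1,\dots,j_{n-1})$ for $j,j_1,\dots,j_{n-1}\in\mathfrak I$; $\mu(j,\overline j_1,\dots,\overline j_{n-1})=\bigcup_{\sigma\in\mathbb S_n}b_\sigma(j,\overline j_1,\dots,\overline j_{n-1})$ for $j,j_1,\dots,j_{n-1}\in\mathfrak I$; $\mu(\overline j,j_1,\dots,j_{n-1})=\bigcup_{1\le k\le n-1,\ \sigma\in\mathbb S_n}b_\sigma(j_k,\overline j,\overline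 j_1,\dots,\overline j_{k-1},\overline j_{k+1},\dots,\overline j_{n-1})$ for $j,j_1,\dots,j_{n-1}\in\mathfrak I$; and $\mu(\overline j,\overline j_1,\dots,\overline j_{n-1})=\emptyset$. $\mathbb V$ is tight if $\mathbb V=\{0\}$ or $\mathbb V=\sum\{\mathbb F\langle e_{i_1},\dots,e_{i_n}\rangle: i_1,\dots,i_n\in I,\ \mu(i_1,\dots,i_n)=\{v\}\}$. The basis $\mathfrak B$ is $\mu$-quasi-multiplicative if whenever $i\in I$, $k_1\in\mathfrak I\,\dot\cup\,\overline{\mathfrak I}$ and $(k_2,\dots,k_n)\in\mathfrak I^{n-1}\,\dot\cup\,\overline{\mathfrak I}^{n-1}$ satisfy $i\in\mu(k_1,k_2,\dots,k_n)$, then $e_i\in\langle w_{k_1},\dots,w_{k_n}\rangle_\sigma$ (linear span) for some $\sigma\in\mathbb S_n$, where $w_k:=e_j$ if $k\in\{j,\overline j\}$ with $j\in I$, and $w_k:=\mathbb V$ if $k\in\{v,\overline v\}$. *)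

From HB Require Import structures.
From mathcomp Require Import all_boot all_order all_algebra all_fingroup.
Set Implicit Arguments.
Unset Strict Implicit.
Unset Printing Implicit Defensive.
Import GRing.Theory.
Local Open Scope ring_scope.

Section ColorGLt.

Variables (F : fieldType) (L : lmodType F).

Definition subspace (S : L -> Prop) :=
  S 0 /\ (forall (a : F) x y, S x -> S y -> S (a *: x + y)).

Inductive span (A : L -> Prop) : L -> Prop :=
| span0 : span A 0
| spanS x : A x -> span A x
| spanZD (a : F) x y : span A x -> span A y -> span A (a *: x + y).

Definition line (v : L) : L -> Prop := fun z => exists c : F, z = c *: v.
Definition subset (A B : L -> Prop) := forall x, A x -> B x.
Definition eqset (A B : L -> Prop) := forall x, A x <-> B x.
Definition nonzero (A : L -> Prop) := exists x, A x /\ x <> 0.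

Variables (G : zmodType) (grade : G -> L -> Prop).

Definition homogeneous (x : L) := exists g, grade g x.

Definition is_grading :=
  (forall g, subspace (grade g)) /\
  (forall x, span homogeneous x) /\
  (forall (gs : seq G) (x : G -> L), uniq gs -> (forall g, grade g (x g)) ->
     \sum_(g <- gs) x g = 0 -> forall g, g \in gs -> x g = 0).

Definition graded_subspace (S : L -> Prop) :=
  subspace S /\ (forall x, S x -> span (fun y => S y /\ homogeneous y) x).

Definition bicharacter (eps : G -> G -> F) :=
  (forall g h, eps g h != 0) /\
  (forall k g h, eps k (g + h) = eps k g * eps k h) /\
  (forall g h k, eps (g + h) k = eps g k * eps h k) /\
  (forall g h, eps g h * eps h g = 1).

Variables (n : nat) (p : {ffun 'I_n -> L} -> L).

Definition upd (x : {ffun 'I_n -> L}) (k : 'I_n) (v : L) : {ffun 'I_n -> L} :=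
  [ffun r => if r == k then v else x r].

Definition multilinear :=
  forall (x : {ffun 'I_n -> L}) (k : 'I_n) (a : F) (y z : L),
    p (upd x k (a *: y + z)) = a *: p (upd x k y) + p (upd x k z).

Definition graded_product :=
  forall (x : {ffun 'I_n -> L}) (gs : 'I_n -> G),
    (forall r, grade (gs r) (x r)) -> grade (\sum_r gs r) (p x).

(* product of a list of arguments (only the first n entries matter) *)
Definition app (s : seq L) : L := p [ffun r : 'I_n => nth 0 s r].

Definition prodsp (A : 'I_n -> L -> Prop) (s : 'S_n) : L -> Prop :=
  span (fun z => exists x : {ffun 'I_n -> L},
          (forall r, A r (x r)) /\ z = p [ffun r => x (s r)]).

(* epsilon-factor of the reordering of the labelled atoms s into t:
   product of eps(deg a, deg b) over the pairs (a, b) with a before b in s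
   and b before a in t. *)
Definition colorfac (eps : G -> G -> F) (deg : nat -> G) (s t : seq nat) : F :=
  \prod_(a <- s) \prod_(b <- s | (index a s < index b s)%N && (index b t < index a t)%N)
     eps (deg a) (deg b).

(* color gLt identity for all k (0-based positions). Atoms: x_r has label r,
   y_r has label n + r. *)
Definition gLt_identity (eps : G -> G -> F)
    (alpha : 'I_n -> 'I_n -> 'I_n -> 'S_n -> 'S_(n.-1) -> F) :=
  forall (k : 'I_n) (x y : nat -> L) (dx dy : nat -> G),
    (forall r, (r < n)%N -> grade (dx r) (x r)) ->
    (forall r, (r < n.-1)%N -> grade (dy r) (y r)) ->
    let deg (l : nat) := if (l < n)%N then dx l else dy (l - n)%N in
    let xs := mkseq x n in
    let ys := mkseq y n.-1 in
    let xl := iota 0 n in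
    let yl := map (addn n) (iota 0 n.-1) in
    app (take k ys ++ app xs :: drop k ys) =
    \sum_(i : 'I_n) \sum_(j : 'I_n) \sum_(s1 : 'S_n) \sum_(s2 : 'S_(n.-1))
      let xs' := [seq x (s1 r) | r <- enum 'I_n] in
      let ys' := [seq y (s2 r) | r <- enum 'I_(n.-1)] in
      let xl' := [seq nat_of_ord (s1 r) | r <- enum 'I_n] in
      let yl' := [seq (n + s2 r)%N | r <- enum 'I_(n.-1)] in
      (alpha i j k s1 s2 *
       colorfac eps deg (take k yl ++ xl ++ drop k yl)
         (take i xl' ++ (take j yl' ++ nth 0%N xl' i :: drop j yl') ++ drop i.+1 xl')) *:
      app (take i xs' ++ app (take j ys' ++ nth 0 xs' i :: drop j ys') :: drop i.+1 xs').

Definition color_gLt_algebra (eps : G -> G -> F) :=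
  exists alpha, gLt_identity eps alpha.

Variables (I : eqType) (e : I -> L).

Definition Wsp (J : I -> Prop) : L -> Prop := span (fun z => exists i, J i /\ z = e i).

Definition lin_indep (J : I -> Prop) :=
  forall (s : seq I) (c : I -> F), uniq s -> (forall i, i \in s -> J i) ->
    \sum_(i <- s) c i *: e i = 0 -> forall i, i \in s -> c i = 0.

(* {e_i : J i} is a quasi-multiplicative basis of W = Wsp J, where the algebra
   (carrier Lc, a subspace of L closed under p) is Lc = V (+) W. *)
Definition qm_basis (Lc V : L -> Prop) (J : I -> Prop) :=
  graded_subspace V /\ graded_subspace (Wsp J) /\ subset V Lc /\ subset (Wsp J) Lc /\
  (forall x, Lc x -> exists v w, V v /\ Wsp J w /\ x = v + w) /\
  (forall x, V x -> Wsp J x -> x = 0) /\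
  nonzero (Wsp J) /\
  (forall i, J i -> homogeneous (e i)) /\ lin_indep J /\
  (forall ix : 'I_n -> I, (forall r, J (ix r)) ->
     (exists j, J j /\ line (e j) (p [ffun r => e (ix r)])) \/ V (p [ffun r => e (ix r)])) /\
  (forall (k : nat) (ix : 'I_n -> I) (s : 'S_n), (0 < k < n)%N ->
     (forall r : 'I_n, (r < k)%N -> J (ix r)) ->
     exists j, J j /\
       subset (prodsp (fun r : 'I_n => if (r < k)%N then (fun z => z = e (ix r)) else V) s)
              (line (e j))) /\
  ((exists j, J j /\ subset (prodsp (fun _ => V) 1%g) (line (e j))) \/
   subset (prodsp (fun _ => V) 1%g) V).

(* option I = I disjoint-union {v}, None standing for v *)
Definition inJ (J : I -> Prop) (j : option I) : Prop :=
  if j is Some i then J i else True.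

Definition u (V : L -> Prop) (j : option I) : L -> Prop :=
  if j is Some i then (fun z => z = e i) else V.

Definition ocons (j : option I) (js : nat -> option I) : nat -> option I :=
  fun r => if r is r'.+1 then js r' else j.

Definition skipk (k : nat) (js : nat -> option I) : nat -> option I :=
  fun r => if (r < k)%N then js r else js r.+1.

(* a_sigma(j_1,...,j_n) as a subset of option I; tuples are nat-indexed from 0 *)
Definition a_map (V : L -> Prop) (J : I -> Prop) (s : 'S_n) (js : nat -> option I)
  : option I -> Prop := fun t =>
  let S := prodsp (fun r : 'I_n => u V (js r)) s in
  nonzero S /\
  match t with
  | Some r => J r /\ subset S (line (e r))
  | None => subset S V
  end.

(* b_sigma(j, jbar_2, ..., jbar_n) = {x : a_sigma(x, j_2, ..., j_n) = {j}} *)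
Definition b_map (V : L -> Prop) (J : I -> Prop) (s : 'S_n) (j : option I)
  (js : nat -> option I) : option I -> Prop := fun x =>
  inJ J x /\ (forall t, a_map V J s (ocons x js) t <-> t = j).

(* mu(k_1, k_2, ..., k_n); the booleans say whether k_1, resp. (k_2,...,k_n),
   are barred *)
Definition mu_map (V : L -> Prop) (J : I -> Prop) (b1 : bool) (j : option I)
  (b2 : bool) (js : nat -> option I) : option I -> Prop :=
  match b1, b2 with
  | false, false => fun t => exists s, a_map V J s (ocons j js) t
  | false, true => fun t => exists s, b_map V J s j js t
  | true, false => fun t => exists (k : nat) s, (k < n.-1)%N /\
                      b_map V J s (js k) (ocons j (skipk k js)) t
  | true, true => fun _ => False
  end.

Definition tight (V : L -> Prop) (J : I -> Prop) :=
  (forall x, V x <-> x = 0) \/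
  (forall x, V x <-> span (fun z => exists ix : nat -> I,
        (forall r, (r < n)%N -> J (ix r)) /\
        (forall t, mu_map V J false (Some (ix 0%N)) false (fun r => Some (ix r.+1)) t
                   <-> t = None) /\
        z = p [ffun r : 'I_n => e (ix r)]) x).

Definition mu_qm (V : L -> Prop) (J : I -> Prop) :=
  forall (b1 : bool) (j : option I) (b2 : bool) (js : nat -> option I) (i : I),
    inJ J j -> (forall r, (r < n.-1)%N -> inJ J (js r)) -> J i ->
    mu_map V J b1 j b2 js (Some i) ->
    exists s : 'S_n, prodsp (fun r : 'I_n => u V (ocons j js r)) s (e i).

Definition center (x : L) :=
  forall s : 'S_n,
    subset (prodsp (fun r : 'I_n => if nat_of_ord r == 0%N then (fun z => z = x)
                                    else (fun _ => True)) s) (fun z => z = 0).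

Definition ideal (Lc T : L -> Prop) :=
  graded_subspace T /\ subset T Lc /\
  forall s : 'S_n,
    subset (prodsp (fun r : 'I_n => if nat_of_ord r == 0%N then T else Lc) s) T.

Definition inherited (V : L -> Prop) (J : I -> Prop) (T VT : L -> Prop) (JT : I -> Prop) :=
  graded_subspace VT /\ subset VT V /\ (forall i, JT i -> J i) /\
  graded_subspace (Wsp JT) /\ nonzero (Wsp JT) /\
  (forall x, VT x -> Wsp JT x -> x = 0) /\
  (forall x, T x <-> exists v w, VT v /\ Wsp JT w /\ x = v + w).

Definition minimal_alg (Lc V : L -> Prop) (J : I -> Prop) :=
  forall (T VT : L -> Prop) (JT : I -> Prop),
    ideal Lc T -> inherited V J T VT JT -> nonzero T -> eqset T Lc.

(* minimal color gLt-ideal S of L (whose quasi-mult. basis is (V, all of I)),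
   with inherited basis (VS, JS) *)
Definition minimal_ideal (V S VS : L -> Prop) (JS : I -> Prop) :=
  ideal (fun _ => True) S /\ inherited V (fun _ => True) S VS JS /\
  minimal_alg S VS JS.

End ColorGLt.

Definition direct_sum (F : fieldType) (L : lmodType F) (K : eqType) (Js : K -> L -> Prop) :=
  (forall x : L, span (fun z => exists k, Js k z) x) /\
  (forall (ks : seq K) (z : K -> L), uniq ks -> (forall k, Js k (z k)) ->
     \sum_(k <- ks) z k = 0 -> forall k, k \in ks -> z k = 0).

(* The index set I is partitioned by the equivalence generated by [linked]: a and b are
   linked when e_a occurs in a nonzero product of basis vectors and copies of V which
   also contains e_b or lies on the line F e_b.  The ideal J_c of a class c is spanned by
   the e_b with b in c and by the products of such basis vectors that fall into V.
   Products of generators from two different classes vanish: for basis vectors this is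
   how the classes are made, and a generator lying in V is expanded by the gLt identity
   into products with one V-factor fewer.  Tightness of V makes L
   the sum of the J_c; the sum is direct because L is centerless, an element of J_c that
   also lies in the span of the other classes annihilating every product.  Minimality
   and the inherited mu-quasi-multiplicative basis come from mu-quasi-multiplicativity
   of L: an ideal inside J_c that contains one e_a contains every e_b linked to it. *)

From Pilot Require Import Defs.
From HB Require Import structures.
From mathcomp Require Import all_boot all_order all_algebra all_fingroup.
From mathcomp Require Import zify.
From Stdlib Require Import Relations ClassicalEpsilon FunctionalExtensionality.
From Stdlib Require Import PropExtensionality Classical.
Set Implicit Arguments.
Unset Strict Implicit.
Unset Printing Implicit Defensive.
Import GRing.Theory.
Local Open Scope ring_scope.

Local Notation dspan := Defs.span.
Local Notation dsubset := Defs.subset.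

Section Subspaces.
Variables (F : fieldType) (L : lmodType F).
Implicit Types (A B Q : L -> Prop).

Lemma subspace_span A : subspace (dspan A).
Proof. by split; [exact: span0 | move=> a x y; exact: spanZD]. Qed.

Lemma span_min A Q : subspace Q -> dsubset A Q -> dsubset (dspan A) Q.
Proof.
move=> [Q0 QZD] AQ x; elim=> [|z Hz|a z y _ Hz _ Hy]; [exact: Q0 | exact: AQ | exact: QZD].
Qed.

Lemma span_mono A B : dsubset A B -> dsubset (dspan A) (dspan B).
Proof. by move=> AB; apply: span_min => [|x /AB]; [exact: subspace_span | exact: spanS]. Qed.

Lemma subspace0 Q : subspace Q -> Q 0.
Proof. by case. Qed.

Lemma subspaceD Q x y : subspace Q -> Q x -> Q y -> Q (x + y).
Proof. by move=> [_ H] Hx Hy; have := H 1 x y Hx Hy; rewrite scale1r. Qed.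

Lemma subspaceZ Q a x : subspace Q -> Q x -> Q (a *: x).
Proof. by move=> [H0 H] Hx; have := H a x 0 Hx H0; rewrite addr0. Qed.

Lemma subspaceN Q x : subspace Q -> Q x -> Q (- x).
Proof. by move=> HQ Hx; rewrite -scaleN1r; exact: subspaceZ. Qed.

Lemma subspaceB Q x y : subspace Q -> Q x -> Q y -> Q (x - y).
Proof. by move=> HQ Hx Hy; apply: subspaceD => //; exact: subspaceN. Qed.

Lemma subspace_big Q (T : Type) (s : seq T) (P : pred T) (f : T -> L) :
  subspace Q -> (forall i, P i -> Q (f i)) -> Q (\sum_(i <- s | P i) f i).
Proof.
move=> HQ Hf; apply: (big_rec Q); first exact: subspace0.
by move=> i x Pi Qx; apply: subspaceD => //; exact: Hf.
Qed.

Lemma spanD A x y : dspan A x -> dspan A y -> dspan A (x + y).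
Proof. exact: subspaceD (subspace_span A). Qed.

Lemma spanZ A a x : dspan A x -> dspan A (a *: x).
Proof. exact: subspaceZ (subspace_span A). Qed.

Lemma subspace_line (v : L) : subspace (line v).
Proof.
split; first by exists 0; rewrite scale0r.
by move=> a x y [c ->] [d ->]; exists (a * c + d); rewrite scalerDl scalerA.
Qed.

Lemma subspace_eq0 : subspace (fun z : L => z = 0).
Proof. by split=> // a x y -> ->; rewrite scaler0 addr0. Qed.

Lemma subspace_add A B : subspace A -> subspace B ->
  subspace (fun x => exists v w, A v /\ B w /\ x = v + w).
Proof.
move=> HA HB; split.
  by exists 0, 0; rewrite addr0; split; [exact: subspace0 | split; [exact: subspace0|]].
move=> a x y [v1 [w1 [H1 [H2 ->]]]] [v2 [w2 [H3 [H4 ->]]]].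
exists (a *: v1 + v2), (a *: w1 + w2); rewrite scalerDr addrACA.
by split; [case: HA => _; apply | split; [case: HB => _; apply|]].
Qed.

End Subspaces.

Section SeqPerm.

Lemma nth_splice (T : Type) (x0 : T) (s : seq T) (i : nat) y r : (i < size s)%N ->
  nth x0 (take i s ++ y :: drop i.+1 s) r = if r == i then y else nth x0 s r.
Proof.
move=> Hi; rewrite nth_cat size_take Hi.
case: ltngtP => Hr; last by rewrite Hr subnn.
- by rewrite nth_take.
- rewrite -(subnSK Hr) /= nth_drop; congr nth; rewrite addSn -addnS subnSK //.
  by rewrite subnKC // ltnW.
Qed.

Definition drop_at (T : Type) (k : nat) (s : seq T) := take k s ++ drop k.+1 s.

Lemma perm_drop_at (T : eqType) (x0 : T) (s : seq T) k : (k < size s)%N ->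
  perm_eq s (nth x0 s k :: drop_at k s).
Proof.
move=> ks; rewrite -[s in perm_eq s](cat_take_drop k) (drop_nth x0 ks).
by rewrite -cat1s perm_catCA.
Qed.


Lemma cat_take_drop_at (T : Type) (x0 : T) (s : seq T) k : (k < size s)%N ->
  take k (drop_at k s) ++ nth x0 s k :: drop k (drop_at k s) = s.
Proof.
move=> ks; rewrite /drop_at take_size_cat ?drop_size_cat ?size_take ?ks //.
by rewrite -drop_nth // cat_take_drop.
Qed.

Lemma perm_map_nth_perm (T : eqType) k (x0 : T) (X : seq T) (s : 'S_k) :
  size X = k -> perm_eq [seq nth x0 X (s r) | r <- enum 'I_k] X.
Proof.
move=> HX.
have {2}<- : [seq nth x0 X (val r) | r <- enum 'I_k] = X.
  by rewrite (map_comp (nth x0 X) val) val_enum_ord -/(mkseq _ _) -HX mkseq_nth.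
rewrite (map_comp (fun r : 'I_k => nth x0 X r) s); apply: perm_map.
apply: uniq_perm; rewrite ?enum_uniq ?(map_inj_uniq (@perm_inj _ s)) ?enum_uniq //.
move=> r; rewrite mem_enum; apply/mapP; exists (s^-1 r)%g; first by rewrite mem_enum.
by rewrite permKV.
Qed.

Lemma perm_pred_prefix k (P : pred 'I_k) :
  exists (t : 'S_k) (j : nat), forall r : 'I_k, P (t r) = (r < j)%N.
Proof.
pose lst := [seq r <- enum 'I_k | P r] ++ [seq r <- enum 'I_k | ~~ P r].
pose j := size [seq r <- enum 'I_k | P r].
have Hperm : perm_eq lst (enum 'I_k) by apply/permPl; exact: perm_filterC.
have Hsz : size lst = k by rewrite (perm_size Hperm) size_enum_ord.
have Huq : uniq lst by rewrite (perm_uniq Hperm) enum_uniq.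
pose t := fun r : 'I_k => nth r lst r.
have tinj : injective t.
  move=> a b; rewrite /t [nth b lst b](set_nth_default a) ?Hsz // => /eqP.
  by rewrite nth_uniq ?Hsz // => /eqP; apply: val_inj.
exists (perm tinj), j => r; rewrite permE /t /lst nth_cat -/j.
case: ifP => Hrj.
  have : nth r [seq q <- enum 'I_k | P q] r \in [seq q <- enum 'I_k | P q] by rewrite mem_nth.
  by rewrite mem_filter => /andP [].
have Hlt : (r - j < size [seq q <- enum 'I_k | ~~ P q])%N.
  by move: Hsz (ltn_ord r) Hrj; rewrite size_cat -/j; lia.
have : nth r [seq q <- enum 'I_k | ~~ P q] (r - j) \in [seq q <- enum 'I_k | ~~ P q].
  by rewrite mem_nth.
by rewrite mem_filter => /andP [/negbTE].
Qed.

End SeqPerm.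

Section Multilinear.
Variables (F : fieldType) (L : lmodType F) (n : nat) (p : {ffun 'I_n -> L} -> L).
Hypothesis p_ml : multilinear p.

Lemma upd_id (f : {ffun 'I_n -> L}) r : upd f r (f r) = f.
Proof. by apply/ffunP => q; rewrite ffunE; case: eqP => // ->. Qed.

Lemma multilinear_eq0 (f : {ffun 'I_n -> L}) r : f r = 0 -> p f = 0.
Proof.
move=> fr0; rewrite -(upd_id f r) fr0.
by have := p_ml f r (-1) 0 0; rewrite scaler0 addr0 scaleN1r addNr.
Qed.

Lemma multilinear_span_slot Q (A : L -> Prop) (f : {ffun 'I_n -> L}) r :
  subspace Q -> dspan A (f r) -> (forall a, A a -> Q (p (upd f r a))) -> Q (p f).
Proof.
move=> HQ Hs Ha; rewrite -(upd_id f r).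
elim: Hs => [|x Ax|a x y _ Hx _ Hy]; last 2 first.
- exact: Ha.
- by rewrite p_ml; case: HQ => _; apply.
by rewrite (multilinear_eq0 (r := r)) ?ffunE ?eqxx //; exact: subspace0.
Qed.

Lemma multilinear_span Q (A : 'I_n -> L -> Prop) (f : {ffun 'I_n -> L}) :
  subspace Q -> (forall r, dspan (A r) (f r)) ->
  (forall g : {ffun 'I_n -> L}, (forall r, A r (g r)) -> Q (p g)) -> Q (p f).
Proof.
move=> HQ Hf Hg.
suff H k (f' : {ffun 'I_n -> L}) : (forall r : 'I_n, (r < k)%N -> dspan (A r) (f' r)) ->
   (forall r : 'I_n, (k <= r)%N -> A r (f' r)) -> Q (p f').
  by apply: (H n) => // r; rewrite leqNgt ltn_ord.
elim: k f' => [|k IH] f' H1 H2; first by apply: Hg => r; apply: H2.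
case: (ltnP k n) => kn; last first.
  apply: IH => r rk; first by apply/H1/ltnW.
  by have := ltn_ord r; rewrite ltnNge (leq_trans kn rk).
apply: (multilinear_span_slot (r := Ordinal kn)) => //; first exact: H1.
move=> a Aa; apply: IH => r; rewrite ffunE.
- move=> rk; case: eqP => [/(congr1 val)/= rk'|_]; first by rewrite rk' ltnn in rk.
  exact/H1/ltnW.
- case: eqP => [->//|/eqP rk'] kr; apply: H2.
  by rewrite ltn_neqAle kr andbT; apply: contra rk' => /eqP h; apply/eqP/val_inj.
Qed.

Lemma mem_prodsp (A : 'I_n -> L -> Prop) (s : 'S_n) (x : {ffun 'I_n -> L}) :
  (forall r, A r (x r)) -> prodsp p A s (p [ffun r => x (s r)]).
Proof. by move=> Hx; apply: spanS; exists x. Qed.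

Lemma mem_prodsp1 (A : 'I_n -> L -> Prop) (x : {ffun 'I_n -> L}) :
  (forall r, A r (x r)) -> prodsp p A 1%g (p x).
Proof.
move=> Hx; have -> : p x = p [ffun r => x ((1%g : 'S_n) r)].
  by congr p; apply/ffunP => r; rewrite !ffunE perm1.
exact: mem_prodsp.
Qed.

Lemma prodsp_min (A : 'I_n -> L -> Prop) (s : 'S_n) Q : subspace Q ->
  (forall x : {ffun 'I_n -> L}, (forall r, A r (x r)) -> Q (p [ffun r => x (s r)])) ->
  dsubset (prodsp p A s) Q.
Proof. by move=> HQ H; apply: span_min => // z [x [Hx ->]]; exact: H. Qed.

Lemma subspace_prodsp A (s : 'S_n) : subspace (prodsp p A s).
Proof. exact: subspace_span. Qed.

Lemma prodsp_mono (A B : 'I_n -> L -> Prop) (s : 'S_n) :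
  (forall r, dsubset (A r) (B r)) -> dsubset (prodsp p A s) (prodsp p B s).
Proof.
move=> AB; apply: prodsp_min => [|x Hx]; first exact: subspace_prodsp.
by apply: mem_prodsp => r; apply: AB.
Qed.

Lemma prodsp_reindex (A : 'I_n -> L -> Prop) (s t : 'S_n) :
  eqset (prodsp p A s) (prodsp p (fun r => A (t r)) (s * t^-1)%g).
Proof.
move=> z; split; move: z; apply: prodsp_min; try exact: subspace_prodsp.
- move=> x Hx.
  have -> : p [ffun r => x (s r)] = p [ffun r => [ffun q => x (t q)] ((s * t^-1)%g r)].
    by congr p; apply/ffunP => r; rewrite !ffunE permM permKV.
  by apply: mem_prodsp => r; rewrite ffunE.
- move=> x Hx.
  have -> : p [ffun r => x ((s * t^-1)%g r)] = p [ffun r => [ffun q => x (t^-1 q)%g] (s r)].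
    by congr p; apply/ffunP => r; rewrite !ffunE permM.
  by apply: mem_prodsp => r; rewrite ffunE; have := Hx (t^-1 r)%g; rewrite permKV.
Qed.

Lemma app_enum (f : 'I_n -> L) : app p [seq f r | r <- enum 'I_n] = p (finfun f).
Proof.
rewrite /app; congr p; apply/ffunP => r; rewrite !ffunE.
by rewrite (nth_map r) ?size_enum_ord // nth_ord_enum.
Qed.

Lemma app_splice (f : 'I_n -> L) (i : 'I_n) z :
  app p (take i [seq f r | r <- enum 'I_n] ++ z :: drop i.+1 [seq f r | r <- enum 'I_n]) =
  p [ffun r => if r == i then z else f r].
Proof.
rewrite /app; congr p; apply/ffunP => r.
rewrite !ffunE nth_splice; last by rewrite size_map size_enum_ord.
case: (r =P i) => [->|/eqP ri]; first by rewrite eqxx.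
have -> : (nat_of_ord r == i) = false by apply/negbTE.
by rewrite (nth_map r) ?size_enum_ord // nth_ord_enum.
Qed.

End Multilinear.

Section ColorGLtAlgebra.
Variables (F : fieldType) (L : lmodType F) (G : zmodType) (grade : G -> L -> Prop)
  (m : nat) (p : {ffun 'I_m.+1 -> L} -> L) (eps : G -> G -> F) (I : eqType)
  (e : I -> L) (V : L -> Prop).
Hypotheses (m_gt0 : (0 < m)%N) (p_ml : multilinear p)
  (p_graded : graded_product grade p) (p_gLt : color_gLt_algebra grade p eps)
  (qmB : qm_basis grade p e (fun _ => True) V (fun _ => True))
  (muB : mu_qm p e V (fun _ => True)) (centerless : forall x, center p x -> x = 0)
  (tightV : tight p e V (fun _ => True)).

Local Notation n := m.+1.
Local Notation W := (Wsp e (fun _ => True)).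
Local Notation uV := (u e V).

Lemma subspaceV : subspace V.
Proof. by case: qmB => [[HV _] _]. Qed.

Lemma decomp_VW x : exists v w, V v /\ W w /\ x = v + w.
Proof. by case: qmB => [_ [_ [_ [_ [H _]]]]]; apply: H. Qed.

Lemma VW_eq0 x : V x -> W x -> x = 0.
Proof. by case: qmB => [_ [_ [_ [_ [_ [H _]]]]]]; apply: H. Qed.

Lemma homog_e i : homogeneous grade (e i).
Proof. by case: qmB => [_ [_ [_ [_ [_ [_ [_ [H _]]]]]]]]; apply: H. Qed.

Lemma free_e : lin_indep e (fun _ => True).
Proof. by case: qmB => [_ [_ [_ [_ [_ [_ [_ [_ [H _]]]]]]]]]. Qed.

Lemma prod_e_line_or_V (ix : 'I_n -> I) :
  (exists j, line (e j) (p [ffun r => e (ix r)])) \/ V (p [ffun r => e (ix r)]).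
Proof.
case: qmB => [_ [_ [_ [_ [_ [_ [_ [_ [_ [H _]]]]]]]]]].
by case: (H ix (fun _ => Logic.I)) => [[j [_ Hj]]|]; [left; exists j | right].
Qed.

Lemma prodsp_eV_line (k : nat) (ix : 'I_n -> I) (s : 'S_n) : (0 < k < n)%N ->
  exists j, dsubset (prodsp p (fun r : 'I_n => if (r < k)%N then (fun z => z = e (ix r)) else V) s)
              (line (e j)).
Proof.
case: qmB => [_ [_ [_ [_ [_ [_ [_ [_ [_ [_ [H _]]]]]]]]]]] Hk.
by case: (H k ix s Hk (fun _ _ => Logic.I)) => j [_ Hj]; exists j.
Qed.

Lemma e_neq0 i : e i != 0.
Proof.
apply/eqP => Hi; have := free_e (s := [:: i]) (c := fun _ => 1) erefl (fun _ _ => Logic.I).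
rewrite big_seq1 scale1r Hi => /(_ erefl i); rewrite mem_seq1 eqxx => /(_ erefl) /eqP.
by rewrite oner_eq0.
Qed.

Lemma W_e i : W (e i).
Proof. by apply: spanS; exists i. Qed.

Lemma line_W j y : line (e j) y -> W y.
Proof. by move=> [d ->]; apply: spanZ; exact: W_e. Qed.

Lemma e_notin_V i : ~ V (e i).
Proof. by move=> Hv; have := e_neq0 i; rewrite (VW_eq0 Hv (W_e i)) eqxx. Qed.

Lemma line_neq0 j y : line (e j) y -> y != 0 -> exists2 d, d != 0 & y = d *: e j.
Proof. by move=> [d ->] Hy; exists d => //; apply: contraNneq Hy => ->; rewrite scale0r. Qed.

Lemma subspace_line_e (S : L -> Prop) j y :
  subspace S -> S y -> line (e j) y -> y != 0 -> S (e j).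
Proof.
move=> HS Sy Hl Hy; have [d dn0 yd] := line_neq0 Hl Hy.
have -> : e j = d^-1 *: y by rewrite yd scalerA mulVf // scale1r.
exact: subspaceZ.
Qed.

Definition target (t : option I) : L -> Prop :=
  if t is Some j then line (e j) else V.

Lemma target_uniq t1 t2 y : y != 0 -> target t1 y -> target t2 y -> t1 = t2.
Proof.
move=> Hy; case: t1 => [j1|]; case: t2 => [j2|] //= H1 H2; last 2 first.
- by move: Hy; rewrite (VW_eq0 H2 (line_W H1)) eqxx.
- by move: Hy; rewrite (VW_eq0 H1 (line_W H2)) eqxx.
case: (j1 =P j2) => [->//|/eqP jn].
have [d1 d1n y1] := line_neq0 H1 Hy; have [d2 _ y2] := line_neq0 H2 Hy.
have := free_e (s := [:: j1; j2]) (c := fun i => if i == j1 then d1 else - d2).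
rewrite /= inE jn /= => /(_ erefl (fun _ _ => Logic.I)).
rewrite big_cons big_seq1 eqxx eq_sym (negbTE jn) scaleNr -y1 -y2 subrr.
by move=> /(_ erefl j1); rewrite inE eqxx => /(_ erefl) h; move: d1n; rewrite h eqxx.
Qed.

Lemma homog_prod_e (ix : 'I_n -> I) : homogeneous grade (p [ffun r => e (ix r)]).
Proof.
have [gs Hgs] := fin_all_exists (fun r : 'I_n => homog_e (ix r)).
by exists (\sum_r gs r); apply: p_graded => r; rewrite ffunE.
Qed.

(* The equivalence closure of [linked] is the connection relation on I of the paper;
   its classes index the minimal ideals. *)
Definition linked (a b : I) : Prop := exists (A : 'I_n -> option I) (s : 'S_n),
  nonzero (prodsp p (fun r => uV (A r)) s) /\ (exists r, A r = Some a) /\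
  ((exists r, A r = Some b) \/ dsubset (prodsp p (fun r => uV (A r)) s) (line (e b))).

Definition connected := clos_refl_sym_trans I linked.

Definition cls (i : I) : I := epsilon (inhabits i) (fun j => connected j i).

Lemma connected_cls i : connected (cls i) i.
Proof.
by apply: (epsilon_spec (inhabits i) (fun j => connected j i)); exists i; apply: rst_refl.
Qed.

Lemma cls_eq i j : connected i j -> cls i = cls j.
Proof.
move=> Hij; rewrite /cls.
have -> : (fun k => connected k i) = (fun k => connected k j).
  apply: functional_extensionality => k; apply: propositional_extensionality; split=> H.
  - exact: rst_trans H Hij.
  - exact: rst_trans H (rst_sym _ _ _ _ Hij).
by apply: epsilon_inh_irrelevance; exists j; apply: rst_refl.
Qed.

Lemma cls_connected a b : cls a = cls b -> connected a b.
Proof.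
move=> H; apply: rst_trans (rst_sym _ _ _ _ (connected_cls a)) _.
by rewrite H; apply: connected_cls.
Qed.

Lemma clsK i : cls (cls i) = cls i.
Proof. exact: cls_eq (connected_cls i). Qed.

Lemma linked_cls a b : linked a b -> cls a = cls b.
Proof. by move=> H; apply: cls_eq; apply: rst_step. Qed.

Lemma exists_neq_ord (i : 'I_n) : exists r : 'I_n, r != i.
Proof.
case: (i =P ord0) => [->|/eqP H]; last by exists ord0; rewrite eq_sym.
by exists ord_max; apply/eqP => /(congr1 val) /= h; move: m_gt0; rewrite h.
Qed.

Lemma prod_e_cls (ix : 'I_n -> I) :
  p [ffun r => e (ix r)] != 0 -> forall r r', cls (ix r) = cls (ix r').
Proof.
move=> Hnz r r'; apply: linked_cls; exists (fun q => Some (ix q)), 1%g.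
split; last by split; [exists r | left; exists r'].
exists (p [ffun r => e (ix r)]); split; last exact/eqP.
by apply: mem_prodsp1 => q; rewrite ffunE.
Qed.

(* Descriptors of the generators of the ideal of class c: [inl b] stands for e_b, and
   [inr (c, ix)] for the product of the e_(ix r), which [dwf] requires to lie in V. *)
Definition desc := (I + I * {ffun 'I_n -> I})%type.

Definition dval (d : desc) : L :=
  match d with inl b => e b | inr (_, ix) => p [ffun r => e (ix r)] end.
Definition dindex (d : desc) : I := match d with inl b => b | inr (c, _) => c end.
Definition dcls (d : desc) : I := match d with inl b => cls b | inr (c, _) => c end.
Definition dbasis (d : desc) : option I := if d is inl b then Some b else None.
Definition isV (d : desc) : bool := if d is inr _ then true else false.
Definition dwf (d : desc) : Prop :=
  match d with
  | inl _ => True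
  | inr (c, ix) => V (p [ffun r => e (ix r)]) /\ forall r, cls (ix r) = c
  end.

Definition gen (c : I) (z : L) := exists d, dwf d /\ dcls d = c /\ z = dval d.
Definition generator (z : L) := exists c, gen c z.
Definition gen_other (c : I) (z : L) := exists2 c', c' <> c & gen c' z.
Definition Jspan (c : I) := dspan (gen c).

Lemma subspace_Jspan c : subspace (Jspan c).
Proof. exact: subspace_span. Qed.

Lemma gen_e b : gen (cls b) (e b).
Proof. by exists (inl b). Qed.

Lemma homog_dval d : homogeneous grade (dval d).
Proof. by case: d => [b|[c ix]]; [exact: homog_e | exact: homog_prod_e]. Qed.

Lemma app_prodsp_dbasis d0 ds : size ds = n -> {in ds, forall d, dwf d} ->
  prodsp p (fun r => uV (dbasis (nth d0 ds r))) 1%g (app p (map dval ds)).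
Proof.
move=> Hsz Hwf; rewrite /app; apply: mem_prodsp1 => r.
rewrite ffunE (nth_map d0) ?Hsz //.
have : nth d0 ds r \in ds by rewrite mem_nth ?Hsz.
by move/Hwf; case: (nth d0 ds r) => [b|[c ix]] //= [].
Qed.

Lemma dbasis_index d0 ds b : size ds = n -> inl b \in ds ->
  exists r : 'I_n, dbasis (nth d0 ds r) = Some b.
Proof.
move=> Hsz Hb; have Hi : (index (inl b) ds < size ds)%N by rewrite index_mem.
by rewrite Hsz in Hi; exists (Ordinal Hi); rewrite /= nth_index.
Qed.

(* The gLt identity at the slot of a V-generator [inr (c, ix)] rewrites a product of
   generators as a combination of products in which ix is spread over the outer
   product and one inner product has lost a V-generator and gained a basis vector. *)
Lemma gLt_expand (ds : seq desc) k c ix d0 (Q : L -> Prop) :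
  size ds = n -> (k < n)%N -> nth d0 ds k = inr (c, ix) -> subspace Q ->
  (forall (i : 'I_n) (s1 : 'S_n) (Y : seq desc),
     perm_eq Y (inl (ix (s1 i)) :: drop_at k ds) ->
     Q (p [ffun r => if r == i then app p (map dval Y) else e (ix (s1 r))])) ->
  Q (app p (map dval ds)).
Proof.
move=> Hsz kn Hk HQ Hterm; case: p_gLt => alpha Hid.
set ds' := drop_at k ds.
have Hs' : size ds' = m.
  by have := perm_size (perm_drop_at d0 (leq_trans kn (eq_leq (esym Hsz)))); rewrite Hsz => -[].
pose x r := e (ix (inord r)).
pose y r := nth 0 (map dval ds') r.
pose dx r := epsilon (inhabits (0 : G)) (fun g => grade g (x r)).
pose dy r := epsilon (inhabits (0 : G)) (fun g => grade g (y r)).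
have Hx r : (r < n)%N -> grade (dx r) (x r).
  by move=> _; apply: (epsilon_spec _ (fun g => grade g (x r))); apply: homog_e.
have Hy r : (r < m)%N -> grade (dy r) (y r).
  move=> rm; apply: (epsilon_spec _ (fun g => grade g (y r))).
  by rewrite /y (nth_map d0) ?Hs' //; exact: homog_dval.
have := Hid (Ordinal kn) x y dx dy Hx Hy; cbv zeta => {}Hid.
have Eds : take k (mkseq y m) ++ app p (mkseq x n) :: drop k (mkseq y m) = map dval ds.
  have -> : mkseq y m = map dval ds' by rewrite /y -Hs' -(size_map dval) mkseq_nth.
  have -> : app p (mkseq x n) = dval (nth d0 ds k).
    by rewrite Hk /app /=; congr p; apply/ffunP => r; rewrite !ffunE nth_mkseq // /x inord_val.
  by rewrite -map_take -map_drop -map_cons -map_cat cat_take_drop_at ?Hsz.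
rewrite -Eds Hid; apply: subspace_big => // i _; apply: subspace_big => // j _.
apply: subspace_big => // s1 _; apply: subspace_big => // s2 _; apply: subspaceZ => //.
set X := [seq nth d0 ds' (s2 r) | r <- enum 'I_m].
have -> : [seq y (s2 r) | r <- enum 'I_m] = map dval X.
  by rewrite /X -map_comp; apply: eq_map => r /=; rewrite /y (nth_map d0) // Hs'.
have -> : [seq x (s1 r) | r <- enum 'I_n] = [seq e (ix (s1 r)) | r <- enum 'I_n].
  by apply: eq_map => r; rewrite /x inord_val.
rewrite (nth_map i) ?size_enum_ord // nth_ord_enum -[e (ix (s1 i))]/(dval (inl (ix (s1 i)))).
have -> : take j (map dval X) ++ dval (inl (ix (s1 i))) :: drop j (map dval X) =
          map dval (take j X ++ inl (ix (s1 i)) :: drop j X).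
  by rewrite map_cat /= map_take map_drop.
rewrite app_splice; apply: Hterm.
rewrite -cat1s perm_catCA cat_take_drop /= perm_cons.
exact: perm_map_nth_perm.
Qed.

Lemma app_basis_mixed_eq0 ds d1 d2 : size ds = n -> ~~ has isV ds ->
  d1 \in ds -> d2 \in ds -> dcls d1 <> dcls d2 -> app p (map dval ds) = 0.
Proof.
move=> Hsz HnV H1 H2 Hne; case: (app p (map dval ds) =P 0) => // /eqP Hnz; exfalso.
have Hinl d : d \in ds -> d = inl (dindex d).
  by move=> Hd; case: d Hd => // -[c ix] Hd; case/hasP: HnV; exists (inr (c, ix)).
pose ix (r : 'I_n) := dindex (nth d1 ds r).
have Happ : app p (map dval ds) = p [ffun r => e (ix r)].
  rewrite /app; congr p; apply/ffunP => r; rewrite !ffunE (nth_map d1) ?Hsz //.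
  by rewrite {1}(Hinl (nth d1 ds r)) ?mem_nth ?Hsz.
have Hidx d : d \in ds -> exists r : 'I_n, dcls d = cls (ix r).
  move=> Hd; have Hi : (index d ds < size ds)%N by rewrite index_mem.
  rewrite Hsz in Hi; exists (Ordinal Hi); rewrite /ix /= nth_index //.
  by rewrite {1}(Hinl d Hd).
have [r1 E1] := Hidx _ H1; have [r2 E2] := Hidx _ H2.
by apply: Hne; rewrite E1 E2; apply: prod_e_cls; rewrite -Happ.
Qed.

(* Induction on the number of V-generators: [gLt_expand] at one of them leaves inner
   products with one V-generator fewer that still mix two classes. *)
Lemma app_mixed_eq0 N ds d1 d2 : (count isV ds <= N)%N -> size ds = n ->
  {in ds, forall d, dwf d} -> d1 \in ds -> d2 \in ds -> dcls d1 <> dcls d2 ->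
  app p (map dval ds) = 0.
Proof.
elim: N ds d1 d2 => [|N IH] ds d1 d2 Hcnt Hsz Hwf H1 H2 Hne.
  by apply: (app_basis_mixed_eq0 Hsz _ H1 H2 Hne); rewrite has_count -leqNgt.
have [HV|HnV] := boolP (has isV ds); last exact: (app_basis_mixed_eq0 Hsz _ H1 H2 Hne).
set k := find isV ds.
have kds : (k < size ds)%N by rewrite -has_find.
have kn : (k < n)%N by rewrite -Hsz.
have Hperm := perm_drop_at d1 kds.
case Ek : (nth d1 ds k) Hperm (nth_find d1 HV) => [//|[c ix]] Hperm _.
have [HVc Hcl] : dwf (inr (c, ix)) by apply: Hwf; rewrite -Ek mem_nth.
have [d' Hd' Hd'c] : exists2 d', d' \in drop_at k ds & dcls d' <> c.
  have [d [Hd Hdc]] : exists d, d \in ds /\ dcls d <> c.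
    case: (dcls d1 =P c) => [E|]; last by exists d1.
    by exists d2; split => // E2; apply: Hne; rewrite E E2.
  exists d => //; move: Hd; rewrite (perm_mem Hperm) inE => /orP [/eqP Ed|//].
  by move: Hdc; rewrite Ed.
apply: (gLt_expand (k := k) (c := c) (ix := ix) (d0 := d1) (Q := fun z => z = 0)) => //.
  exact: subspace_eq0.
move=> i s1 Y HY; apply: (multilinear_eq0 p_ml (r := i)); rewrite ffunE eqxx.
apply: (IH _ (inl (ix (s1 i))) d').
- have /seq.permP C1 := Hperm; have /seq.permP C2 := HY.
  by move: Hcnt; rewrite C1 C2 /= add0n add1n ltnS.
- by rewrite (perm_size HY) /=; have := perm_size Hperm; rewrite Hsz => -[<-].
- move=> d; rewrite (perm_mem HY) inE => /orP [/eqP -> //|Hd].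
  by apply: Hwf; rewrite (perm_mem Hperm) inE Hd orbT.
- by rewrite (perm_mem HY) mem_head.
- by rewrite (perm_mem HY) inE Hd' orbT.
- by rewrite /= Hcl; apply: nesym.
Qed.

Lemma prod_gen_mixed_eq0 (g : {ffun 'I_n -> L}) (cf : 'I_n -> I) r1 r2 :
  (forall r, gen (cf r) (g r)) -> cf r1 <> cf r2 -> p g = 0.
Proof.
move=> Hg Hne; have [dd Hdd] := fin_all_exists Hg.
have -> : g = finfun (dval \o dd) by apply/ffunP => r; rewrite ffunE; case: (Hdd r) => _ [_ ->].
rewrite -app_enum (map_comp dval dd); apply: (app_mixed_eq0 (N := n) (d1 := dd r1) (d2 := dd r2)).
- by rewrite (leq_trans (count_size _ _)) // size_map size_enum_ord.
- by rewrite size_map size_enum_ord.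
- by move=> d /mapP [r _ ->]; case: (Hdd r).
- by rewrite map_f ?mem_enum.
- by rewrite map_f ?mem_enum.
- by case: (Hdd r1) => _ [-> _]; case: (Hdd r2) => _ [-> _].
Qed.

Lemma prod_generators_mixed_eq0 (g : {ffun 'I_n -> L}) c r1 r2 :
  (forall r, generator (g r)) -> gen c (g r1) -> ~ gen c (g r2) -> p g = 0.
Proof.
move=> Hg H1 H2.
have Hc r : exists c', gen c' (g r) /\ (r = r1 -> c' = c).
  case: (r =P r1) => [->|Hr]; first by exists c.
  by have [c' Hc'] := Hg r; exists c'; split => // /Hr.
have [cf Hcf] := fin_all_exists Hc.
apply: (prod_gen_mixed_eq0 (cf := cf) (r1 := r1) (r2 := r2)) => [r|]; first by case: (Hcf r).
by case: (Hcf r1) => _ -> // E; apply: H2; rewrite E; case: (Hcf r2).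
Qed.

Lemma prodsp_target (A : 'I_n -> option I) (s : 'S_n) : (exists r, A r <> None) ->
  exists t, dsubset (prodsp p (fun r => uV (A r)) s) (target t) /\
            (t = None -> forall r, A r <> None).
Proof.
move=> [r0 Hr0]; have [b0 Hb0] : exists b, A r0 = Some b by case: (A r0) Hr0 => // b; exists b.
pose ix r := odflt b0 (A r).
have uV_ix r : A r <> None -> uV (A r) = (fun z => z = e (ix r)) by rewrite /ix; case: (A r).
case: (classic (forall r, A r <> None)) => Hall.
  have Hsub Q : subspace Q -> Q (p [ffun r => e (ix (s r))]) ->
      dsubset (prodsp p (fun r => uV (A r)) s) Q.
    move=> HQ HQp; apply: prodsp_min => // x Hx.
    have -> // : [ffun r => x (s r)] = [ffun r => e (ix (s r))].
    by apply/ffunP => r; rewrite !ffunE; have := Hx (s r); rewrite uV_ix.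
  case: (prod_e_line_or_V (fun r => ix (s r))) => [[j Hj]|HV].
    by exists (Some j); split => //; apply: Hsub => //; exact: subspace_line.
  by exists None; split => //; apply: Hsub => //; exact: subspaceV.
have [r1 Hr1] : exists r, A r = None.
  by apply: NNPP => H; apply: Hall => r Hr; apply: H; exists r.
have [t [j Ht]] := perm_pred_prefix (fun r => isSome (A r)).
have Hj : (0 < j < n)%N.
  have := Ht (t^-1 r0)%g; have := Ht (t^-1 r1)%g; rewrite !permKV Hb0 Hr1 /=.
  by move=> /esym/negbT; rewrite -leqNgt => H1 /esym H0; rewrite (leq_ltn_trans H1) ?ltn_ord //
    (leq_ltn_trans _ H0).
have [b Hb] := prodsp_eV_line (fun r => ix (t r)) (s * t^-1)%g Hj.
exists (Some b); split => // z /(prodsp_reindex _ _ _ t) Hz; apply: Hb.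
have -> : (fun r : 'I_n => if (r < j)%N then (fun z => z = e (ix (t r))) else V) =
          (fun r => uV (A (t r))).
  apply: functional_extensionality => r; rewrite -Ht.
  by case E : (A (t r)) => [b'|]; rewrite /ix E.
exact: Hz.
Qed.

Lemma Jspan_app_basis c ds : size ds = n -> {in ds, forall d, dwf d /\ dcls d = c} ->
  has (predC isV) ds -> Jspan c (app p (map dval ds)).
Proof.
move=> Hsz Hds /hasP [[b0|//] Hb0 _].
have Hwf : {in ds, forall d, dwf d} by move=> d /Hds [].
have Hin := app_prodsp_dbasis (inl b0) Hsz Hwf.
have [r0 Hr0] := dbasis_index (inl b0) Hsz Hb0.
have [|t [Hsub Hnone]] := @prodsp_target (fun r => dbasis (nth (inl b0) ds r)) 1%g.
  by exists r0; rewrite Hr0.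
case: (app p (map dval ds) =P 0) => [->|/eqP Hnz]; first exact: span0.
have Hcb : cls b0 = c by case: (Hds _ Hb0).
case: t Hsub Hnone => [j|] Hsub Hnone.
  have [d _ ->] := line_neq0 (Hsub _ Hin) Hnz.
  have Hlink : linked b0 j.
    exists (fun r => dbasis (nth (inl b0) ds r)), 1%g.
    by split; [exists (app p (map dval ds)); split => //; exact/eqP | split; [exists r0 | right]].
  by apply/spanZ/spanS; rewrite -Hcb (linked_cls Hlink); exact: gen_e.
have Hbasis (r : 'I_n) : nth (inl b0) ds r = inl (dindex (nth (inl b0) ds r)).
  by have := Hnone erefl r; case: (nth (inl b0) ds r).
pose ix := [ffun r : 'I_n => dindex (nth (inl b0) ds r)].
have Happ : app p (map dval ds) = p [ffun r => e (ix r)].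
  rewrite /app; congr p; apply/ffunP => r; rewrite !ffunE (nth_map (inl b0)) ?Hsz //.
  by rewrite {1}Hbasis.
apply: spanS; exists (inr (c, ix)); split; last by split.
split; first by rewrite -Happ; exact: Hsub.
move=> r; rewrite ffunE; have : nth (inl b0) ds r \in ds by rewrite mem_nth ?Hsz.
by move/Hds => [_]; rewrite Hbasis.
Qed.

Lemma Jspan_prod_basis c (g : {ffun 'I_n -> L}) r0 b :
  (forall r, gen c (g r)) -> g r0 = e b -> cls b = c -> Jspan c (p g).
Proof.
move=> Hg Hr0 Hb; have [dd Hdd] := fin_all_exists Hg.
pose dd' r := if r == r0 then inl b else dd r.
have -> : g = finfun (dval \o dd').
  apply/ffunP => r; rewrite ffunE /dd' /=; case: eqP => [->|_] //.
  by case: (Hdd r) => _ [_ ->].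
rewrite -app_enum (map_comp dval dd'); apply: Jspan_app_basis.
- by rewrite size_map size_enum_ord.
- by move=> d /mapP [r _ ->]; rewrite /dd'; case: eqP => _ //; case: (Hdd r) => ? [? _].
- by apply/hasP; exists (dd' r0); rewrite ?map_f ?mem_enum // /dd' eqxx.
Qed.

Lemma Jspan_prod c (g : {ffun 'I_n -> L}) : (forall r, gen c (g r)) -> Jspan c (p g).
Proof.
move=> Hg; have [dd Hdd] := fin_all_exists Hg.
case: (classic (exists r b, dd r = inl b)) => [[r [b Hr]]|Hno].
  case: (Hdd r) => _; rewrite Hr /= => -[Hc Hgr].
  exact: Jspan_prod_basis Hgr Hc.
have -> : g = finfun (dval \o dd) by apply/ffunP => r; rewrite ffunE; case: (Hdd r) => _ [_ ->].
rewrite -app_enum (map_comp dval dd); set ds := map dd (enum 'I_n).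
have Hsz : size ds = n by rewrite size_map size_enum_ord.
have Hds : {in ds, forall d, dwf d /\ dcls d = c}.
  by move=> d /mapP [r _ ->]; case: (Hdd r) => ? [? _].
have Hd0 : nth (dd ord0) ds 0 = dd ord0.
  by rewrite (nth_map ord0) ?size_enum_ord // (nth_ord_enum ord0 ord0).
case E0 : (dd ord0) Hd0 => [b|[c0 ix]] Hd0; first by case: Hno; exists ord0, b.
have [[_ Hcl] /= Hc0] : dwf (inr (c0, ix)) /\ dcls (inr (c0, ix)) = c.
  by rewrite -E0; apply: Hds; rewrite map_f ?mem_enum.
apply: (gLt_expand (k := 0) (c := c0) (ix := ix) (d0 := inr (c0, ix)) (Q := Jspan c)) => //.
  exact: subspace_Jspan.
move=> i s1 Y HY; set f := [ffun r => _].
have Hperm := perm_drop_at (inr (c0, ix)) (ltac:(by rewrite Hsz) : (0 < size ds)%N).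
have HYc : Jspan c (app p (map dval Y)).
  apply: Jspan_app_basis.
  - by rewrite (perm_size HY) /=; have := perm_size Hperm; rewrite Hsz => -[<-].
  - move=> d; rewrite (perm_mem HY) inE => /orP [/eqP ->|Hd]; first by rewrite /= Hcl.
    by apply: Hds; rewrite (perm_mem Hperm) inE Hd orbT.
  - by apply/hasP; exists (inl (ix (s1 i))); rewrite ?(perm_mem HY) ?mem_head.
apply: (multilinear_span_slot p_ml (r := i) (A := gen c)); first exact: subspace_Jspan.
  by rewrite ffunE eqxx.
move=> a Ha; have [r' Hr'] := exists_neq_ord i.
apply: (Jspan_prod_basis (r0 := r') (b := ix (s1 r'))); last by rewrite Hcl.
  move=> r; rewrite ffunE; case: eqP => [//|/eqP Hri].
  by rewrite ffunE (negbTE Hri) -Hc0 -(Hcl (s1 r)); exact: gen_e.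
by rewrite ffunE (negbTE Hr') ffunE (negbTE Hr').
Qed.

Lemma gen_prod_V (ix : 'I_n -> I) : V (p [ffun r => e (ix r)]) -> p [ffun r => e (ix r)] != 0 ->
  gen (cls (ix ord0)) (p [ffun r => e (ix r)]).
Proof.
move=> HV Hnz; exists (inr (cls (ix ord0), finfun ix)) => /=.
rewrite (_ : [ffun r => e (finfun ix r)] = [ffun r => e (ix r)]); last first.
  by apply/ffunP => r; rewrite !ffunE.
by split=> //; split=> // r; rewrite ffunE; apply: prod_e_cls.
Qed.

Lemma V_span_gen y : V y -> dspan (fun z => V z /\ generator z) y.
Proof.
case: tightV => [V0|Vspan] Hy; first by rewrite ((V0 y).1 Hy); exact: span0.
apply: span_min ((Vspan y).1 Hy) => [|_ [ix [_ [Hmu ->]]]]; first exact: subspace_span.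
set z := p _; case: (z =P 0) => [->|/eqP Hnz]; first exact: span0.
have ocons_ix (r : 'I_n) : ocons (Some (ix 0%N)) (fun q => Some (ix q.+1)) r = Some (ix r).
  by case: r => [[|q] Hq].
have HV : V z.
  case: (prod_e_line_or_V (fun r => ix r)) => // -[j Hj].
  suff : Some j = None by [].
  apply/(Hmu (Some j)); exists 1%g; split.
    exists z; split; last exact/eqP.
    by apply: mem_prodsp1 => q; rewrite ffunE ocons_ix.
  split=> //; apply: prodsp_min => [|x Hx]; first exact: subspace_line.
  have -> // : [ffun r => x ((1%g : 'S_n) r)] = [ffun r : 'I_n => e (ix r)].
  by apply/ffunP => q; rewrite !ffunE perm1; have := Hx q; rewrite ocons_ix.
by apply: spanS; split => //; eexists; exact: (gen_prod_V HV Hnz).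
Qed.

Lemma span_generators x : dspan generator x.
Proof.
have [v [w [Hv [Hw ->]]]] := decomp_VW x; apply: spanD.
  by apply: span_mono (V_span_gen Hv) => z [_].
by apply: span_mono Hw => z [i [_ ->]]; exists (cls i); exact: gen_e.
Qed.

Lemma prod_slot_gen c (A : L -> Prop) (Q : L -> Prop) (f : {ffun 'I_n -> L}) rho :
  subspace Q -> dsubset A (gen c) -> dspan A (f rho) ->
  (forall g : {ffun 'I_n -> L}, A (g rho) -> (forall r, gen c (g r)) -> Q (p g)) -> Q (p f).
Proof.
move=> HQ HA Hf Hg.
apply: (multilinear_span p_ml (A := fun r => if r == rho then A else generator)) => //.
  by move=> r; case: eqP => [->//|_]; exact: span_generators.
move=> g Hg'; have Hgrho : A (g rho) by have := Hg' rho; rewrite eqxx.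
case: (classic (forall r, gen c (g r))) => [Hall|Hnot]; first exact: Hg.
have [r1 Hr1] : exists r, ~ gen c (g r).
  by apply: NNPP => H; apply: Hnot => r; apply: NNPP => H'; apply: H; exists r.
rewrite (prod_generators_mixed_eq0 (c := c) (r1 := rho) (r2 := r1)) //; first exact: subspace0.
  by move=> r; have := Hg' r; case: eqP => [_ /HA|_ //]; exists c.
exact: HA.
Qed.

(* Centerlessness: a vector in both spans multiplies every generator tuple to 0,
   through [z in span (gen_other c)] if the other slots have class c, and through
   [z in Jspan c] otherwise. *)
Lemma Jspan_other_eq0 c z : Jspan c z -> dspan (gen_other c) z -> z = 0.
Proof.
move=> Hzc Hzo; apply: centerless => s; apply: prodsp_min => [|x Hx]; first exact: subspace_eq0.
set f := [ffun r => x (s r)]; pose rho := (s^-1 ord0)%g.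
have Hfrho : f rho = z by rewrite /f ffunE /rho permKV; exact: (Hx ord0).
apply: (multilinear_span p_ml (Q := fun y => y = 0)
          (A := fun r => if r == rho then (fun y => y = z) else generator)).
- exact: subspace_eq0.
- by move=> r; case: eqP => [->|_]; [apply: spanS | exact: span_generators].
move=> g Hg; have Hgrho : g rho = z by have := Hg rho; rewrite eqxx.
have Hany r : r != rho -> generator (g r) by move=> /negbTE Hr; have := Hg r; rewrite Hr.
rewrite -(upd_id g rho) Hgrho; have [r' Hr'] := exists_neq_ord rho.
case: (classic (forall r, r != rho -> gen c (g r))) => [Hall|Hnot].
  elim: Hzo => [|y [c' Hc' Hy]|a y1 y2 _ H1 _ H2].
  - by apply: (multilinear_eq0 p_ml (r := rho)); rewrite ffunE eqxx.
  - apply: (prod_gen_mixed_eq0 (cf := fun r => if r == rho then c' else c) (r1 := rho) (r2 := r')).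
      by move=> r; rewrite ffunE; case: eqP => [_|/eqP Hr] //; exact: Hall.
    by rewrite eqxx (negbTE Hr').
  - by rewrite p_ml H1 H2 scaler0 addr0.
have [r1 [Hr1 Hr1']] : exists r, r != rho /\ ~ gen c (g r).
  by apply: NNPP => H; apply: Hnot => r Hr; apply: NNPP => H'; apply: H; exists r.
elim: Hzc => [|y Hy|a y1 y2 _ H1 _ H2].
- by apply: (multilinear_eq0 p_ml (r := rho)); rewrite ffunE eqxx.
- apply: (prod_generators_mixed_eq0 (c := c) (r1 := rho) (r2 := r1)).
  + by move=> r; rewrite ffunE; case: eqP => [_|/eqP Hr]; [exists c | exact: Hany].
  + by rewrite ffunE eqxx.
  + by rewrite ffunE (negbTE Hr1).
- by rewrite p_ml H1 H2 scaler0 addr0.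
Qed.

Definition Icls (c : I) : I -> Prop := fun i => cls i = c.
Definition Vcls (c : I) : L -> Prop := dspan (fun z => exists ix : {ffun 'I_n -> I},
  (forall r, cls (ix r) = c) /\ V z /\ z = p [ffun r => e (ix r)]).
Definition Jcls (c : I) : L -> Prop :=
  fun x => exists v w, Vcls c v /\ Wsp e (Icls c) w /\ x = v + w.

Lemma subspace_Jcls c : subspace (Jcls c).
Proof. by apply: subspace_add; exact: subspace_span. Qed.

Lemma Vcls_V c : dsubset (Vcls c) V.
Proof. by apply: span_min; [exact: subspaceV | move=> z [ix [_ []]]]. Qed.

Lemma Vcls_Jspan c : dsubset (Vcls c) (Jspan c).
Proof. by apply: span_mono => z [ix [Hcl [HV Ez]]]; subst z; exists (inr (c, ix)). Qed.

Lemma gen_V_Vcls c y : gen c y -> V y -> Vcls c y.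
Proof.
move=> [[b|[c' ix]] [Hwf [/= Hc ->]]] /= HV; first by case: (e_notin_V HV).
by case: Hwf => _ Hcl; subst c'; apply: spanS; exists ix.
Qed.

Lemma Jcls_Jspan c x : Jcls c x <-> Jspan c x.
Proof.
split.
  move=> [v [w [Hv [Hw ->]]]]; apply: spanD; first exact: Vcls_Jspan.
  by apply: span_mono Hw => z [i [<- ->]]; exact: gen_e.
apply: span_min => [|z [[b|[c' ix]] [Hwf [/= <- ->]]]]; first exact: subspace_Jcls.
  exists 0, (e b); rewrite add0r; split; first exact: span0.
  by split => //; apply: spanS; exists b.
case: Hwf => HV Hcl; exists (p [ffun r => e (ix r)]), 0; rewrite addr0.
by split; [apply: spanS; exists ix | split => //; exact: span0].
Qed.

Lemma ideal_subspace (S T : L -> Prop) : ideal grade p S T -> subspace T.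
Proof. by case=> [[]]. Qed.

Lemma ideal_prod (S T : L -> Prop) (g : {ffun 'I_n -> L}) rho :
  ideal grade p S T -> T (g rho) -> (forall r, S (g r)) -> T (p g).
Proof.
move=> [_ [_ Hid]] Hrho HS; pose s := tperm ord0 rho.
have -> : p g = p [ffun r => [ffun q => g (s q)] (s r)].
  by congr p; apply/ffunP => r; rewrite !ffunE tpermK.
apply: (Hid s); apply: mem_prodsp => r; rewrite ffunE.
case: (r =P ord0) => [->|Hr] /=; first by rewrite tpermL.
have -> : (nat_of_ord r == 0%N) = false by apply/negbTE/eqP => h; apply: Hr; apply: val_inj.
exact: HS.
Qed.

Definition aset (S : L -> Prop) (t : option I) := nonzero S /\ dsubset S (target t).

Lemma a_map_aset (s : 'S_n) (js : nat -> option I) t :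
  a_map p e V (fun _ => True) s js t <-> aset (prodsp p (fun r => uV (js r)) s) t.
Proof. by case: t => [j|] /=; split => [[H1 H2]|[H1 H2]]; split => //; case: H2. Qed.

Lemma aset_eqset S1 S2 t : eqset S1 S2 -> aset S1 t -> aset S2 t.
Proof.
move=> E [[y [Hy Hnz]] Hs]; split; first by exists y; split => //; apply/E.
by move=> z /E; apply: Hs.
Qed.

Lemma aset_uniq S t1 t2 : aset S t1 -> aset S t2 -> t1 = t2.
Proof. by move=> [[y [Hy /eqP Hnz]] H1] [_ H2]; apply: (target_uniq Hnz (H1 _ Hy) (H2 _ Hy)). Qed.

(* mu-quasi-multiplicativity applied to mu(t, jbar_2, ..., jbar_n), where the j_r are
   the slots of A other than the slot rb of e_b, brought to the front by a transposition. *)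
Lemma mu_move_front (A : 'I_n -> option I) (s : 'S_n) rb b t : A rb = Some b ->
  aset (prodsp p (fun r => uV (A r)) s) t ->
  exists (B : 'I_n -> option I) (s' : 'S_n), B ord0 = t /\
    (forall r, r != ord0 -> B r = A (tperm ord0 rb r)) /\
    prodsp p (fun r => uV (B r)) s' (e b).
Proof.
move=> HAb Hset; pose tau := tperm ord0 rb; pose Bf r := A (tau r).
pose js (q : nat) := if insub q.+1 is Some o then Bf o else None.
have Hocons x (r : 'I_n) : ocons x js r = if r == ord0 then x else Bf r.
  case: r => [[|q] Hq] //=; rewrite /js; case: insubP => [o _ Ho|]; last by rewrite Hq.
  by congr Bf; apply: val_inj.
have Hu : (fun r : 'I_n => uV (ocons (Some b) js r)) = (fun r : 'I_n => uV (Bf r)).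
  apply: functional_extensionality => r; rewrite Hocons; case: eqP => [->|//].
  by rewrite /Bf /tau tpermL HAb.
have Hinj : inJ (fun _ => True) t by case: t {Hset}.
have Hinjs r : (r < n.-1)%N -> inJ (fun _ => True) (js r) by case: (js r).
have [|s' Hs'] := @muB false t true js b Hinj Hinjs Logic.I.
  exists (s * tau^-1)%g; split => // t'; rewrite a_map_aset Hu; split.
  - by move=> H; apply: (aset_uniq H); apply: aset_eqset Hset; exact: prodsp_reindex.
  - by move=> ->; apply: aset_eqset Hset; exact: prodsp_reindex.
exists (fun r => ocons t js r), s'; split => //; split => // r Hr.
by rewrite Hocons (negbTE Hr).
Qed.

Section IdealOfClass.
Variables (c : I) (T : L -> Prop).
Hypothesis T_ideal : ideal grade p (Jcls c) T.

Lemma ideal_prodsp_e a (A : 'I_n -> option I) r0 (s : 'S_n) :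
  A r0 = Some a -> cls a = c -> T (e a) -> dsubset (prodsp p (fun r => uV (A r)) s) T.
Proof.
move=> HA Ha HTa; apply: prodsp_min => [|x Hx]; first exact: ideal_subspace T_ideal.
pose rho := (s^-1 r0)%g.
have Hf : [ffun r => x (s r)] rho = e a by rewrite ffunE /rho permKV; have := Hx r0; rewrite HA.
apply: (prod_slot_gen (c := c) (A := fun y => y = e a) (rho := rho)).
- exact: ideal_subspace T_ideal.
- by move=> y ->; rewrite -Ha; exact: gen_e.
- by rewrite Hf; apply: spanS.
move=> g Hg Hall; apply: (ideal_prod (rho := rho) T_ideal); first by rewrite Hg.
by move=> r; apply/Jcls_Jspan/spanS.
Qed.


Lemma ideal_line_e a (A : 'I_n -> option I) (s : 'S_n) r0 b :
  A r0 = Some a -> cls a = c -> T (e a) -> nonzero (prodsp p (fun r => uV (A r)) s) ->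
  dsubset (prodsp p (fun r => uV (A r)) s) (line (e b)) -> T (e b).
Proof.
move=> HA Ha HTa [y [Hy /eqP Hnz]] Hl.
exact: subspace_line_e (ideal_subspace T_ideal) (ideal_prodsp_e HA Ha HTa Hy) (Hl _ Hy) Hnz.
Qed.

Lemma ideal_move_e a b (A : 'I_n -> option I) (s : 'S_n) rb :
  cls a = c -> T (e a) -> A rb = Some b -> nonzero (prodsp p (fun r => uV (A r)) s) ->
  (exists2 ra, ra != rb & A ra = Some a) \/ dsubset (prodsp p (fun r => uV (A r)) s) (line (e a)) ->
  T (e b).
Proof.
move=> Ha HTa HAb Hnz H.
have [t [Hset Ht]] : exists t, aset (prodsp p (fun r => uV (A r)) s) t /\
     (t = Some a \/ exists2 ra, ra != rb & A ra = Some a).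
  case: H => [Hra|Hl]; last by exists (Some a); split => //; left.
  have [|t [Hsub _]] := @prodsp_target A s; first by exists rb; rewrite HAb.
  by exists t; split => //; right.
have [B [s' [HB0 [HBr He]]]] := mu_move_front HAb Hset.
case: Ht => [Eta|[ra Hra HAa]].
  by apply: (ideal_prodsp_e (A := B) (r0 := ord0) _ Ha HTa He); rewrite HB0 Eta.
apply: (ideal_prodsp_e (A := B) (r0 := tperm ord0 rb ra) _ Ha HTa He).
rewrite HBr ?tpermK //; apply: contra Hra => /eqP Hra0.
by have := congr1 (tperm ord0 rb) Hra0; rewrite tpermK tpermL => ->.
Qed.

Lemma ideal_connected x y : connected x y -> cls x = c -> T (e x) <-> T (e y).
Proof.
elim => {x y} [x y Hxy|x|x y Hxy IH|x y z Hxy IH1 Hyz IH2] Hx; last 3 first.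
- by [].
- by apply: iff_sym; apply: IH; rewrite (cls_eq Hxy).
- exact: iff_trans (IH1 Hx) (IH2 (etrans (esym (cls_eq Hxy)) Hx)).
have Hy : cls y = c by rewrite -(linked_cls Hxy).
case: Hxy => A [s [Hnz [[r1 Hr1] Hb]]]; split => HT.
  case: Hb => [[r2 Hr2]|Hl]; last exact: (ideal_line_e Hr1 Hx HT Hnz Hl).
  case: (r1 =P r2) => [E|/eqP Hne]; first by move: Hr2; rewrite -E Hr1 => -[<-].
  by apply: (ideal_move_e (rb := r2) Hx HT Hr2 Hnz); left; exists r1.
case: Hb => [[r2 Hr2]|Hl]; last exact: (ideal_move_e Hy HT Hr1 Hnz (or_intror Hl)).
case: (r1 =P r2) => [E|/eqP Hne]; first by move: Hr2; rewrite -E Hr1 => -[->].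
by apply: (ideal_move_e (rb := r1) Hy HT Hr1 Hnz); left; exists r2; rewrite // eq_sym.
Qed.

End IdealOfClass.

Lemma minimal_Jcls c : minimal_alg grade p e (Jcls c) (Vcls c) (Icls c).
Proof.
move=> T VT JT Tid [HVT [_ [HJT [_ [[x [Hx Hx0]] [_ HT]]]]]] _.
have [i0 Hi0] : exists i, JT i.
  apply: NNPP => H; apply: Hx0; move: x Hx; apply: span_min => [|z [i [Hi _]]].
    exact: subspace_eq0.
  by case: H; exists i.
have HTi0 : T (e i0).
  apply/HT; exists 0, (e i0); rewrite add0r; split; first exact: (subspace0 HVT.1).
  by split => //; apply: spanS; exists i0.
have HTb b : cls b = c -> T (e b).
  move=> Hb; have Hbi0 : connected b i0 by apply: cls_connected; rewrite Hb (HJT i0 Hi0).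
  by apply/(ideal_connected Tid Hbi0 Hb).
move=> y; split; first by case: Tid => _ [H _]; apply: H.
move/Jcls_Jspan; apply: span_min => [|z [[b|[c' ix]] [Hwf [/= Hc ->]]]].
- exact: ideal_subspace Tid.
- exact: HTb.
case: Hwf => HV Hcl; subst c'.
apply: (ideal_prod (rho := ord0) Tid); first by rewrite ffunE; apply: HTb.
by move=> r; rewrite ffunE; apply/Jcls_Jspan/spanS; rewrite -(Hcl r); exact: gen_e.
Qed.

Lemma a_map_Vcls c (js : nat -> option I) i (s : 'S_n) t : js 0%N = Some i ->
  a_map p e (Vcls c) (Icls c) s js t ->
  forall t', a_map p e V (fun _ => True) s js t' <-> t' = t.
Proof.
move=> Hjs0 Hsub t'; rewrite a_map_aset.
have Hinc : dsubset (prodsp p (fun r => u e (Vcls c) (js r)) s) (prodsp p (fun r => uV (js r)) s).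
  by apply: prodsp_mono => r z; case: (js r) => [x|] //=; apply: Vcls_V.
have [y [Hy /eqP Hnz] Hty] : exists2 y,
    prodsp p (fun r => u e (Vcls c) (js r)) s y /\ y <> 0 & target t y.
  case: Hsub => [[y [Hy Hnz]] Ht]; exists y => //.
  by case: t Ht => [j [_ Hl]|Hv] /=; [exact: Hl | exact: Vcls_V (Hv _ Hy)].
have [|t0 [Ht0 _]] := @prodsp_target (fun r : 'I_n => js r) s.
  by exists ord0; rewrite /= Hjs0.
split => [[_ Hsub']|->]; first exact: (target_uniq Hnz (Hsub' _ (Hinc _ Hy)) Hty).
have E0 : t0 = t := target_uniq Hnz (Ht0 _ (Hinc _ Hy)) Hty.
by split; [exists y; split => //; [exact: Hinc | exact/eqP] | rewrite -E0].
Qed.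

Lemma prodsp_Vcls_Jspan c (A : 'I_n -> option I) (s : 'S_n) :
  (forall r x, A r = Some x -> cls x = c) ->
  dsubset (prodsp p (fun r => u e (Vcls c) (A r)) s) (Jspan c).
Proof.
move=> HA; apply: prodsp_min => [|x Hx]; first exact: subspace_Jspan.
apply: (multilinear_span p_ml (A := fun _ => gen c)) => [||g Hg]; last exact: Jspan_prod.
  exact: subspace_Jspan.
move=> r; rewrite ffunE; have := Hx (s r); case E: (A (s r)) => [b|] /= Hb; last exact: Vcls_Jspan.
by rewrite Hb; apply: spanS; rewrite -(HA _ _ E); exact: gen_e.
Qed.

Lemma prodsp_V_decomp c (A : 'I_n -> option I) (s : 'S_n) y :
  prodsp p (fun r => uV (A r)) s y ->
  exists y1 y2, prodsp p (fun r => u e (Vcls c) (A r)) s y1 /\ dspan (gen_other c) y2 /\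
                y = y1 + y2.
Proof.
pose Q y := exists y1 y2, prodsp p (fun r => u e (Vcls c) (A r)) s y1 /\
                         dspan (gen_other c) y2 /\ y = y1 + y2.
have HQ : subspace Q by apply: subspace_add; [exact: subspace_prodsp | exact: subspace_span].
move: y; apply: prodsp_min => // x Hx.
apply: (multilinear_span p_ml (Q := Q) (A := fun r => if A (s r) is Some b then (fun z => z = e b)
                                              else (fun z => V z /\ generator z))) => //.
  move=> r; rewrite ffunE; have := Hx (s r).
  by case: (A (s r)) => [b|] /= Hb; [apply: spanS | exact: V_span_gen].
move=> g Hg.
have Hany r : generator (g r).
  by have := Hg r; case: (A (s r)) => [b|] /= => [->|[]//]; exists (cls b); exact: gen_e.
case: (classic (forall r, gen c (g r))) => [Hall|Hnot].
  exists (p g), 0; rewrite addr0; split; last by split => //; exact: span0.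
  have -> : p g = p [ffun r => [ffun q => g (s^-1 q)%g] (s r)].
    by congr p; apply/ffunP => r; rewrite !ffunE permK.
  apply: mem_prodsp => q; rewrite ffunE; have := Hg (s^-1 q)%g; rewrite permKV.
  by case: (A q) => [b|] //= [HV _]; exact: gen_V_Vcls (Hall _) HV.
have [r1 Hr1] : exists r, ~ gen c (g r).
  by apply: NNPP => H; apply: Hnot => r; apply: NNPP => H'; apply: H; exists r.
have [cf Hcf] := fin_all_exists Hany.
case: (classic (exists r r', cf r <> cf r')) => [[r [r' Hmix]]|Hsame].
  exists 0, 0; rewrite (prod_gen_mixed_eq0 Hcf Hmix) addr0.
  by split; [exact: span0 | split; [exact: span0 |]].
have Hall' r : gen (cf r1) (g r).
  by have -> : cf r1 = cf r by apply: NNPP => H; apply: Hsame; exists r1, r.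
exists 0, (p g); rewrite add0r; split; first exact: span0.
split => //; apply: span_mono (Jspan_prod Hall') => z Hz.
by exists (cf r1) => // E; apply: Hr1; rewrite -E.
Qed.

(* e_i minus the [Vcls c]-part of its decomposition lies both in [Jspan c] and in the
   span of the other classes, hence vanishes. *)
Lemma prodsp_Vcls_e c (A : 'I_n -> option I) (s : 'S_n) i :
  (forall r x, A r = Some x -> cls x = c) -> cls i = c ->
  prodsp p (fun r => uV (A r)) s (e i) -> prodsp p (fun r => u e (Vcls c) (A r)) s (e i).
Proof.
move=> HA Hi Hin; have [y1 [y2 [Hy1 [Hy2 Ey]]]] := prodsp_V_decomp c Hin.
suff : e i - y1 = 0 by move/eqP; rewrite subr_eq0 => /eqP ->.
apply: (Jspan_other_eq0 (c := c)); last by rewrite Ey addrAC subrr add0r.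
apply: subspaceB; [exact: subspace_Jspan | apply: spanS; rewrite -Hi; exact: gen_e |].
exact: prodsp_Vcls_Jspan Hy1.
Qed.

Lemma mu_qm_Vcls c : mu_qm p e (Vcls c) (Icls c).
Proof.
move=> b1 j b2 js i Hj Hjs Hi Hmap.
have HA (r : 'I_n) x : ocons j js r = Some x -> cls x = c.
  case: r => [[|q] Hq] /= E; first by move: Hj; rewrite E.
  by have := Hjs q Hq; rewrite E.
have Hinj : inJ (fun _ => True) j by case: j {Hj HA Hmap}.
have Hinjs r : (r < n.-1)%N -> inJ (fun _ => True) (js r) by case: (js r).
case: b1 Hmap => [] ; case: b2 => [] //= Hmap.
- case: Hmap => k [s [Hk Hb]].
  have HL := a_map_Vcls (js := ocons (Some i) (ocons j (skipk k js))) erefl ((Hb.2 (js k)).2 erefl).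
  have [s' Hs'] := @muB true j false js i Hinj Hinjs Logic.I
     (ex_intro _ k (ex_intro _ s (conj Hk (conj Logic.I HL)))).
  by exists s'; exact: prodsp_Vcls_e HA Hi Hs'.
- case: Hmap => s Hb.
  have HL := a_map_Vcls (js := ocons (Some i) js) erefl ((Hb.2 j).2 erefl).
  have [s' Hs'] := @muB false j true js i Hinj Hinjs Logic.I (ex_intro _ s (conj Logic.I HL)).
  by exists s'; exact: prodsp_Vcls_e HA Hi Hs'.
- case: Hmap => s [[y [Hy /eqP Hnz]] [_ Hl]].
  by exists s; exact: subspace_line_e (subspace_prodsp _ _ _) Hy (Hl _ Hy) Hnz.
Qed.

Lemma ideal_Jcls c : ideal grade p (fun _ => True) (Jcls c).
Proof.
split.
  split; first exact: subspace_Jcls.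
  move=> x /Jcls_Jspan; apply: span_mono => y Hy; split; first exact/Jcls_Jspan/spanS.
  by case: Hy => d [_ [_ ->]]; exact: homog_dval.
split=> // s; apply: prodsp_min => [|x Hx]; first exact: subspace_Jcls.
pose rho := (s^-1 ord0)%g.
apply/Jcls_Jspan; apply: (prod_slot_gen (c := c) (A := gen c) (rho := rho)) => //.
- exact: subspace_Jspan.
- by rewrite ffunE /rho permKV; apply/Jcls_Jspan; exact: (Hx ord0).
- by move=> g _; exact: Jspan_prod.
Qed.

Lemma inherited_Jcls c : cls c = c ->
  inherited grade e V (fun _ => True) (Jcls c) (Vcls c) (Icls c).
Proof.
move=> Hc; split.
  split; first exact: subspace_span.
  move=> x; apply: span_mono => z Hz; split; first exact: spanS.
  by case: Hz => ix [_ [_ ->]]; exact: homog_prod_e.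
split; first exact: Vcls_V.
split=> //; split.
  split; first exact: subspace_span.
  move=> x; apply: span_mono => z Hz; split; first exact: spanS.
  by case: Hz => i [_ ->]; exact: homog_e.
split.
  exists (e c); split; last exact/eqP/e_neq0.
  by apply: spanS; exists c.
split=> // x Hv Hw; apply: VW_eq0; first exact: Vcls_V Hv.
by apply: span_mono Hw => z [i [_ ->]]; exists i.
Qed.

Lemma gen_clsK c z : gen c z -> cls c = c.
Proof.
move=> [[b|[c' ix]] [Hwf [/= <- _]]]; first exact: clsK.
by case: Hwf => _ Hcl; rewrite -(Hcl ord0) clsK.
Qed.

Lemma direct_sum_Jcls : direct_sum (fun k : {i : I | cls i == i} => Jcls (val k)).
Proof.
split.
  move=> x; apply: span_mono (span_generators x) => z [c Hz].
  exists (exist _ c (introT eqP (gen_clsK Hz))); exact/Jcls_Jspan/spanS.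
move=> ks z Huq Hz Hsum k0 Hk0.
apply: (Jspan_other_eq0 (c := val k0)); first exact/Jcls_Jspan.
have -> : z k0 = - \sum_(k <- ks | k != k0) z k.
  by apply/eqP; rewrite -addr_eq0 -(bigD1_seq _ Hk0 Huq) Hsum.
apply: subspaceN; first exact: subspace_span.
apply: subspace_big => [|k Hk]; first exact: subspace_span.
apply: span_mono ((Jcls_Jspan _ _).1 (Hz k)) => y Hy; exists (val k) => // E.
by move/negP: Hk; apply; apply/eqP/val_inj.
Qed.

End ColorGLtAlgebra.

Theorem theorem4p4 (F : fieldType) (L : lmodType F) (G : zmodType)
  (grade : G -> L -> Prop) (n : nat) (p : {ffun 'I_n -> L} -> L)
  (eps : G -> G -> F) (I : eqType) (e : I -> L) (V : L -> Prop) :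
  (2 <= n)%N ->
  is_grading grade ->
  multilinear p ->
  graded_product grade p ->
  bicharacter eps ->
  color_gLt_algebra grade p eps ->
  qm_basis grade p e (fun _ => True) V (fun _ => True) ->
  mu_qm p e V (fun _ => True) ->
  (forall x, center p x -> x = 0) ->
  tight p e V (fun _ => True) ->
  exists (K : eqType) (Js Vs : K -> L -> Prop) (Is : K -> I -> Prop),
    (forall k, minimal_ideal grade p e V (Js k) (Vs k) (Is k) /\ mu_qm p e (Vs k) (Is k)) /\
    direct_sum Js.
Proof.
case: n p => [|m] p //; rewrite ltnS => m_gt0 _ p_ml p_graded _ p_gLt qmB muB centerless tightV.
exists {i : I | cls p e V i == i}, (fun k => Jcls p e V (val k)),
  (fun k => Vcls p e V (val k)), (fun k => Icls p e V (val k)).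
split=> [k|]; last by apply: (direct_sum_Jcls (grade := grade) (eps := eps)).
split; last by apply: (mu_qm_Vcls (grade := grade) (eps := eps)).
split; first by apply: (ideal_Jcls (grade := grade) (eps := eps)).
split; first by apply: (inherited_Jcls (grade := grade)); last exact: (eqP (valP k)).
by apply: (minimal_Jcls (grade := grade) (eps := eps)).
Qed.
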